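(* For any $1\le q\le \mathsf n$, conditionally on $X_{q:\mathsf n}$, $(V_{\mathsf n},\dots,V_1)$ is a Markov chain. Its transition kernels $(K^{V|X}_{\pi_V,k,q})$ satisfy: for all $q\le k<\mathsf n$ there exists a measure $\mu_{k,q}$ such that for every measurable set $A$, \[K^{V|X}_{\pi_V,k,q}(V_{k+1},A)=\mathbb P_{\pi_V}(V_k\in A\mid V_{k+1:\mathsf n},X_{q:\mathsf n})=\mathbb P_{\pi_V}(V_k\in A\mid V_{k+1},X_{q:\mathsf n})\ge\nu_k\,\mu_{k,q}(A),\] while for all $1\le k<q$, \[K^{V|X}_{\pi_V,k,q}(V_{k+1},A)=\mathbb P_{\pi_V}(V_k\in A\mid V_{k+1:\mathsf n},X_{q:\mathsf n})=\pi_V(A).\]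
   Context: Let $\mathsf n\ge1$, $\pi_V$ a probability distribution on a measurable space $\mathbb V$, $\mathbb X$ a discrete set, and $K_i:\mathbb X\times\mathbb V^2\to[0,\infty)$ ($i\ge1$) such that each $K_i(\cdot,v,w)$ is a probability distribution on $\mathbb X$. $\mathbb P_{\pi_V}$ is the law on $\mathbb V^{\mathsf n+1}\times\mathbb X^{\mathsf n}$ given by $\mathbb P_{\pi_V}(V_{1:\mathsf n+1}\in A_{1:\mathsf n+1},X_{1:\mathsf n}=x_{1:\mathsf n})=\int\prod_{i=1}^{\mathsf n+1}\mathbf 1_{A_i}(v_i)\pi_V(dv_i)\prod_{i=1}^{\mathsf n}K_i(x_i,v_i,v_{i+1})$, i.e. $V_i$ i.i.d. $\pi_V$ and, given $V$, the $X_i$ independent with $\mathbb P(X_i=x\mid V)=K_i(x,V_i,V_{i+1})$. Assumption H2: there exist $\nu_i>0$ with $\nu_i\le K_i(x,v,w)\le1$ for all $x\in\mathbb X$, all $i$, all $v,w\in\mathbb V$. *)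

From HB Require Import structures.
From mathcomp Require Import all_boot all_order all_algebra.
From mathcomp Require Import all_classical all_reals all_analysis measurable_realfun.
Set Implicit Arguments. Unset Strict Implicit. Unset Printing Implicit Defensive.
Import Order.TTheory GRing.Theory Num.Theory.
Local Open Scope classical_set_scope.
Local Open Scope ring_scope.

Section HMM.
Context {R : realType} {d : measure_display} {V : measurableType d}.
Variable piV : probability V R.

(* Integral of f against the n-fold product measure piV^{(x) m} on m-tuples,
   computed as an iterated integral (first coordinate outermost). *)
Fixpoint tint (m : nat) : (m.-tuple V -> \bar R) -> \bar R :=
  match m return (m.-tuple V -> \bar R) -> \bar R with
  | 0 => fun f => f [tuple]
  | m'.+1 => fun f => (\int[piV]_v tint (fun t : m'.-tuple V => f (cons_tuple v t)))%E
  end.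

Variables (X : finType) (n : nat) (K : nat -> X -> V -> V -> R).

(* Coordinates are 0-based in tuples: V_i = tnth v (i-1), X_i = tnth x (i-1).
   weight x v = prod_{i=1}^n K_i(x_i, v_i, v_{i+1}). *)
Definition weight (x : n.-tuple X) (v : (n.+1).-tuple V) : R :=
  \prod_(i < n) K i.+1 (tnth x i) (tnth v (widen_ord (leqnSn n) i))
                                  (tnth v (lift ord0 i)).

Definition agree (q : nat) (x y : n.-tuple X) : bool :=
  [forall i : 'I_n, (q <= i.+1)%N ==> (tnth x i == tnth y i)].

(* E_{P_{pi_V}}[ f(V_{1:n+1}) ; X_{q:n} = y_{q:n} ], where P_{pi_V} is the
   joint law: V_i iid pi_V, and given V, X_i independent with law
   K_i(., V_i, V_{i+1}). *)
Definition PE (q : nat) (f : (n.+1).-tuple V -> \bar R) (y : n.-tuple X) : \bar R :=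
  (\sum_(x : n.-tuple X | agree q x y) tint (fun v => f v * (weight x v)%:E))%E.

Definition depends_only (lo hi : nat) (B : set ((n.+1).-tuple V)) : Prop :=
  forall v v' : (n.+1).-tuple V,
    (forall i : 'I_n.+1, (lo <= i.+1 <= hi)%N -> tnth v i = tnth v' i) ->
    B v -> B v'.

(* Kc y w A is a version of P(V_k \in A | V_{lo:hi}, X_{q:n}) evaluated at
   V_{k+1} = w, X_{q:n} = y_{q:n}: for every measurable A and every set B in
   sigma(V_{lo:hi}) and every y,
   P(V_k in A, V_{1:n+1} in B, X_{q:n} = y_{q:n})
     = E[ Kc y V_{k+1} A ; V_{1:n+1} in B, X_{q:n} = y_{q:n} ]. *)
Definition cond_version (q k lo hi : nat)
    (Kc : n.-tuple X -> V -> probability V R) : Prop :=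
  forall (y : n.-tuple X) (A : set V) (B : set ((n.+1).-tuple V)),
    measurable A -> measurable B -> depends_only lo hi B ->
    PE q (fun v => (\1_B v * \1_A (tnth v (inord k.-1)))%:E) y =
    PE q (fun v => ((\1_B v)%:E * Kc y (tnth v (inord k)) A)%E) y.

End HMM.

From HB Require Import structures.
From mathcomp Require Import all_boot all_order all_algebra.
From mathcomp Require Import all_classical all_reals all_analysis measurable_realfun.
From mathcomp Require Import zify.
Import Order.TTheory GRing.Theory Num.Theory.
Local Open Scope classical_set_scope.
Local Open Scope ring_scope.

(* Summing the joint density over the unobserved X_1, ..., X_{q-1} leaves, as
   density of V_{1:n+1} on the event X_{q:n} = y_{q:n}, the likelihood
   prod_{i >= q} K_i(y_i, V_i, V_{i+1}). Cut at V_{k+1}, it splits into a factor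
   depending on V_{1:k+1} and one depending on V_{k+1:n+1}; by Fubini, the
   conditional law of V_k given V_{k+1:n} and X_{q:n} is then the normalised
   V_k-marginal of the first factor, a function of V_{k+1} alone. For k < q
   that factor is 1 and the kernel is pi_V. For k >= q its only term involving
   V_{k+1} is K_k(y_k, V_k, V_{k+1}), which lies in [nu_k, 1]: dropping it gives
   a law mu with nu_k mu <= kernel. *)

Lemma indic_ge0 (R : numDomainType) (T : Type) (A : set T) (x : T) : 0 <= \1_A x :> R.
Proof. by rewrite indicE ler0n. Qed.

Section tuple_integral.
Local Open Scope ereal_scope.
Context {R : realType} {d : measure_display} {V : measurableType d}.
Variable piV : probability V R.
Local Notation ti := (tint piV).

Lemma tint_ge0 m (f : m.-tuple V -> \bar R) : (forall t, 0 <= f t) -> 0 <= ti f.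
Proof.
elim: m f => [|m IH] f f0 /=; first exact: f0.
by apply: integral_ge0 => v _; apply: IH => t; exact: f0.
Qed.

Lemma measurable_tint {m d'} {T : measurableType d'} (H : T * m.-tuple V -> \bar R) :
  measurable_fun setT H -> (forall z, 0 <= H z) ->
  measurable_fun setT (fun t => ti (fun u => H (t, u))).
Proof.
elim: m d' T H => [|m IH] d' T H mH H0 /=.
  exact: measurableT_comp mH (measurable_fun_pair _ _).
pose H' (z : (T * V) * m.-tuple V) := H (z.1.1, cons_tuple z.1.2 z.2).
have mH' : measurable_fun setT H'.
  apply: measurableT_comp mH _; apply: measurable_fun_pair.
    exact: measurableT_comp.
  exact: measurable_cons (measurableT_comp _ _) _.
have := measurable_fun_fubini_tonelli_F (m2 := piV) _ (IH _ _ H' mH' (fun z => H0 _))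
  (fun z => tint_ge0 _ _ (fun _ => H0 _)).
by rewrite /fubini_F.
Qed.

Let measurable_cons_tuple m (f : m.+1.-tuple V -> \bar R) v :
  measurable_fun setT f -> measurable_fun setT (fun u => f (cons_tuple v u)).
Proof. by move=> mf; exact: measurableT_comp mf (measurable_cons _ _). Qed.

Let measurable_tint_cons m (f : m.+1.-tuple V -> \bar R) :
  measurable_fun setT f -> (forall t, 0 <= f t) ->
  measurable_fun setT (fun v => ti (fun u => f (cons_tuple v u))).
Proof.
move=> mf f0; apply: (measurable_tint (fun z => f (cons_tuple z.1 z.2))) => //.
exact: measurableT_comp mf (measurable_cons _ _).
Qed.

Lemma tint_cst m c : ti (fun _ : m.-tuple V => c) = c.
Proof.
elim: m => [|m IH] //=; under eq_integral do rewrite IH.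
by rewrite integral_cst // [X in _ * X]probability_setT mule1.
Qed.

Lemma ge0_tint_sum m (I : Type) (s : seq I) (f : I -> m.-tuple V -> \bar R) :
  (forall i, measurable_fun setT (f i)) -> (forall i t, 0 <= f i t) ->
  ti (fun t => \sum_(i <- s) f i t) = \sum_(i <- s) ti (f i).
Proof.
elim: m f => [|m IH] f mf f0 //=.
transitivity (\int[piV]_v \sum_(i <- s) ti (fun u => f i (cons_tuple v u))).
  by apply: eq_integral => v _; apply: IH => // i; exact: measurable_cons_tuple.
rewrite ge0_integral_sum //.
- by move=> i; exact: measurable_tint_cons.
- by move=> i v _; exact: tint_ge0.
Qed.

Lemma ge0_tintZl m (c : \bar R) (f : m.-tuple V -> \bar R) :
  0 <= c -> measurable_fun setT f -> (forall t, 0 <= f t) ->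
  ti (fun t => c * f t) = c * ti f.
Proof.
elim: m f => [|m IH] f c0 mf f0 //=.
transitivity (\int[piV]_v (c * ti (fun u => f (cons_tuple v u)))).
  by apply: eq_integral => v _; apply: IH => //; exact: measurable_cons_tuple.
rewrite ge0_integralZl //; first exact: measurable_tint_cons.
by move=> v _; exact: tint_ge0.
Qed.

Lemma tint_nneseries m (f : nat -> m.-tuple V -> \bar R) :
  (forall i, measurable_fun setT (f i)) -> (forall i t, 0 <= f i t) ->
  ti (fun t => \sum_(0 <= i <oo) f i t) = \sum_(0 <= i <oo) ti (f i).
Proof.
elim: m f => [|m IH] f mf f0 //=.
transitivity (\int[piV]_v \sum_(0 <= i <oo) ti (fun u => f i (cons_tuple v u))).
  by apply: eq_integral => v _; apply: IH => // i; exact: measurable_cons_tuple.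
rewrite integral_nneseries //.
- by move=> i; exact: measurable_tint_cons.
- by move=> i v _; exact: tint_ge0.
Qed.

Lemma ge0_le_tint m (f g : m.-tuple V -> \bar R) :
  measurable_fun setT f -> measurable_fun setT g -> (forall t, 0 <= f t) ->
  (forall t, f t <= g t) -> ti f <= ti g.
Proof.
elim: m f g => [|m IH] f g mf mg f0 fg //=.
apply: ge0_le_integral => //.
- by move=> v _; exact: tint_ge0.
- exact: measurable_tint_cons.
- by apply: measurable_tint_cons => // t; exact: le_trans (f0 t) (fg t).
- by move=> v _; apply: IH => //; exact: measurable_cons_tuple.
Qed.

Let integral_tint_swap m (H : V * m.-tuple V -> \bar R) :
  measurable_fun setT H -> (forall z, 0 <= H z) ->
  \int[piV]_v ti (fun u => H (v, u)) = ti (fun u => \int[piV]_v H (v, u)).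
Proof.
elim: m H => [|m IH] H mH H0 //=.
pose F (z : V * V) := ti (fun u => H (z.1, cons_tuple z.2 u)).
have mF : measurable_fun setT F.
  apply: (measurable_tint (fun z => H (z.1.1, cons_tuple z.1.2 z.2))) => //.
  apply: measurableT_comp mH _; apply: measurable_fun_pair.
    exact: measurableT_comp.
  exact: measurable_cons (measurableT_comp _ _) _.
rewrite (fubini_tonelli F mF (fun z => tint_ge0 _ _ (fun _ => H0 _))) /=.
apply: eq_integral => w _; apply: (IH (fun z => H (z.1, cons_tuple w z.2))) => //.
apply: measurableT_comp mH (measurable_fun_pair _ _) => //.
exact: measurable_cons.
Qed.

Lemma tint_swap m1 m2 (H : m1.-tuple V * m2.-tuple V -> \bar R) :
  measurable_fun setT H -> (forall z, 0 <= H z) ->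
  ti (fun a => ti (fun b => H (a, b))) = ti (fun b => ti (fun a => H (a, b))).
Proof.
elim: m1 H => [|m1 IH] H mH H0 //=.
transitivity (\int[piV]_v ti (fun b => ti (fun a => H (cons_tuple v a, b)))).
  apply: eq_integral => v _; apply: (IH (fun z => H (cons_tuple v z.1, z.2))) => //.
  apply: measurableT_comp mH (measurable_fun_pair _ _) => //.
  exact: measurable_cons.
apply: (@integral_tint_swap _ (fun z => ti (fun a => H (cons_tuple z.1 a, z.2)))).
  apply: (measurable_tint (fun z => H (cons_tuple z.1.1 z.2, z.1.2))) => //.
  apply: measurableT_comp mH (measurable_fun_pair _ _).
    exact: measurable_cons (measurableT_comp _ _) _.
  exact: measurableT_comp.
by move=> z; exact: tint_ge0.
Qed.

Lemma tint_swap_mul m1 m2 (F : m2.-tuple V -> \bar R)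
    (G : m1.-tuple V * m2.-tuple V -> \bar R) :
  measurable_fun setT F -> measurable_fun setT G ->
  (forall b, 0 <= F b) -> (forall z, 0 <= G z) ->
  ti (fun a => ti (fun b => F b * G (a, b))) = ti (fun b => F b * ti (fun a => G (a, b))).
Proof.
move=> mF mG F0 G0; rewrite (@tint_swap _ _ (fun z => F z.2 * G z)) //; last first.
- by move=> z; exact: mule_ge0.
- exact: emeasurable_funM (measurableT_comp mF measurable_snd) mG.
congr ti; apply/funext => b /=; rewrite ge0_tintZl //.
exact: measurableT_comp mG (measurable_fun_pair _ _).
Qed.

Lemma tint_cat m1 m2 (f : (m1 + m2).-tuple V -> \bar R) :
  ti f = ti (fun a : m1.-tuple V => ti (fun b : m2.-tuple V => f (cat_tuple a b))).
Proof.
elim: m1 f => [|m1 IH] f /=.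
  by congr ti; apply/funext => b; congr f; exact/val_inj.
apply: eq_integral => v _; rewrite (IH (fun t => f (cons_tuple v t))).
by congr ti; apply/funext => a; congr ti; apply/funext => b; congr f; exact/val_inj.
Qed.

Lemma tint_tcast m m' (e : m = m') (f : m'.-tuple V -> \bar R) :
  ti f = ti (fun t => f (tcast e t)).
Proof. by case: m' / e in f *; congr ti; apply/funext => t; rewrite tcast_id. Qed.

Lemma tint_indic_nth m j (A : set V) : (j < m)%N -> measurable A ->
  ti (fun t : m.-tuple V => (\1_A (nth point t j))%:E) = piV A.
Proof.
elim: m j => [|m IH] [|j] //= jm mA.
  by under eq_integral do rewrite tint_cst; rewrite integral_indic // setIT.
under eq_integral do rewrite IH //.
by rewrite integral_cst // [X in _ * X]probability_setT mule1.
Qed.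

End tuple_integral.

Section measurable_seq.
Context {d : measure_display} {V : measurableType d}.

Lemma measurable_nth m j : measurable_fun setT (fun t : m.-tuple V => nth point (val t) j).
Proof.
case: (ltnP j m) => jm.
  rewrite (_ : (fun t : m.-tuple V => _) = fun t => tnth t (Ordinal jm)).
    exact: measurable_tnth.
  by apply/funext => t; rewrite (tnth_nth point).
rewrite (_ : (fun t : m.-tuple V => _) = cst point) //.
by apply/funext => t; rewrite nth_default // size_tuple.
Qed.

(* [seq V] carries no sigma-algebra: a seq-valued map is called measurable when
   all its coordinates are, coordinates out of range being [point]. *)
Definition measurable_seq {d'} {T : measurableType d'} (s : T -> seq V) :=
  forall j, measurable_fun setT (fun z => nth point (s z) j).

Context {d' : measure_display} {T : measurableType d'}.

Lemma measurable_seq_val m (f : T -> m.-tuple V) :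
  measurable_fun setT f -> measurable_seq (fun z => val (f z)).
Proof. by move=> mf j; exact: measurableT_comp (measurable_nth m j) mf. Qed.

Lemma measurable_tuple_seq m (f : T -> m.-tuple V) :
  measurable_seq (fun z => val (f z)) -> measurable_fun setT f.
Proof.
move=> sf; apply/measurable_fun_tnthP => i.
rewrite (_ : _ \o _ = fun z => nth point (val (f z)) i); first exact: sf.
by apply/funext => z /=; rewrite (tnth_nth point).
Qed.

Lemma measurable_seq_cat m (s1 s2 : T -> seq V) :
  (forall z, size (s1 z) = m) -> measurable_seq s1 -> measurable_seq s2 ->
  measurable_seq (fun z => s1 z ++ s2 z).
Proof.
move=> sz m1 m2 j; case: (ltnP j m) => jm.
  rewrite (_ : (fun z => _) = (fun z => nth point (s1 z) j)); first exact: m1.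
  by apply/funext => z; rewrite nth_cat sz jm.
rewrite (_ : (fun z => _) = (fun z => nth point (s2 z) (j - m))); first exact: m2.
by apply/funext => z; rewrite nth_cat sz ltnNge jm.
Qed.

Lemma measurable_seq1 (w : T -> V) :
  measurable_fun setT w -> measurable_seq (fun z => [:: w z]).
Proof. by move=> mw [|j]. Qed.

End measurable_seq.

Section tuple_density.
Local Open Scope ereal_scope.
Context {R : realType} {d : measure_display} {V : measurableType d}.
Variable piV : probability V R.
Context {d' : measure_display} {U : measurableType d'} {m : nat}.
Context {h : m.-tuple V -> U} {g : m.-tuple V -> R}.

(* The hypotheses on [h] and [g] are arguments so that the measure instance
   below is found by unification. *)
Definition tdensity of measurable_fun setT h & measurable_fun setT g &
    (forall a, (0 <= g a)%R) := fun A : set U =>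
  tint piV (fun a => (\1_A (h a))%:E * (g a)%:E).

Hypotheses (mh : measurable_fun setT h) (mg : measurable_fun setT g)
  (g0 : forall a, (0 <= g a)%R).
Local Notation D := (tdensity mh mg g0).

Let measurable_integrand A : measurable A ->
  measurable_fun setT (fun a => (\1_A (h a))%:E * (g a)%:E).
Proof.
move=> mA; apply: emeasurable_funM; apply/measurable_EFinP => //.
exact: measurableT_comp (measurable_indic _) mh.
Qed.

Let tdensity0 : D set0 = 0.
Proof.
rewrite /D /tdensity (_ : (fun a => _) = fun _ => 0) ?tint_cst //.
by apply/funext => a; rewrite indic0 mul0e.
Qed.

Let tdensity_ge0 A : 0 <= D A.
Proof. by apply: tint_ge0 => a; rewrite mule_ge0 // lee_fin ?g0 ?indic_ge0. Qed.

Let tdensity_sigma_additive : semi_sigma_additive D.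
Proof.
move=> F mF tF mUF.
have -> : D (\bigcup_n F n) = \sum_(0 <= i <oo) D (F i).
  rewrite /D /tdensity -tint_nneseries; last 2 first.
  - by move=> i; exact: measurable_integrand.
  - by move=> i a; rewrite mule_ge0 // lee_fin ?g0 ?indic_ge0.
  congr tint; apply/funext => a.
  have -> : (\1_(\bigcup_n F n) (h a))%:E = \sum_(0 <= i <oo) (\1_(F i) (h a))%:E :> \bar R.
    rewrite -diracE; apply/esym/cvg_lim => //.
    under eq_fun do under eq_bigr do rewrite -diracE.
    exact: measure_sigma_additive.
  rewrite muleC -nneseriesZl; last by move=> i _; rewrite lee_fin indic_ge0.
  by apply: eq_eseriesr => i _; rewrite muleC.
by apply: is_cvg_nneseries => i _ _; exact: tdensity_ge0.
Qed.

HB.instance Definition _ := isMeasure.Build _ _ _ D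
  tdensity0 tdensity_ge0 tdensity_sigma_additive.

Lemma tdensityT : D setT = tint piV (fun a => (g a)%:E).
Proof. by congr tint; apply/funext => a; rewrite indicT mul1e. Qed.

End tuple_density.

Section tuple_density_kernel.
Local Open Scope ereal_scope.
Context {R : realType} {d : measure_display} {V : measurableType d}.
Variable piV : probability V R.
Context {d1 d2 : measure_display} {T : measurableType d1} {U : measurableType d2}.
Context {m : nat} {h : m.-tuple V -> U} {G : T * m.-tuple V -> R}.
Hypotheses (mh : measurable_fun setT h) (mG : measurable_fun setT G)
  (G0 : forall z, (0 <= G z)%R).

Definition tdensity_kernel : T -> {measure set U -> \bar R} := fun t =>
  tdensity piV mh (measurableT_comp mG (pair1_measurable t)) (fun a => G0 (t, a)).

Let measurable_tdensity A : measurable A -> measurable_fun setT (tdensity_kernel ^~ A).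
Proof.
move=> mA; apply: (measurable_tint piV (fun z => (\1_A (h z.2))%:E * (G z)%:E)).
- apply: emeasurable_funM; apply/measurable_EFinP => //.
  exact: measurableT_comp (measurable_indic _) (measurableT_comp mh measurable_snd).
- by move=> z; rewrite mule_ge0 // lee_fin ?G0 ?indic_ge0.
Qed.

HB.instance Definition _ :=
  isKernel.Build _ _ _ _ _ tdensity_kernel measurable_tdensity.

End tuple_density_kernel.

Section mnormalize_facts.
Local Open Scope ereal_scope.
Context d (T : measurableType d) (R : realType).
Variable P : probability T R.
Implicit Types mu : {measure set T -> \bar R}.

Lemma mnormalizeE mu A : 0 < mu setT < +oo ->
  mnormalize mu P A = mu A * (fine (mu setT))^-1%:E.
Proof.
case/andP=> mu0 muoo; rewrite /mnormalize.
by rewrite (gt_eqF mu0) (lt_eqF muoo).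
Qed.

Lemma mnormalize_mul_setT mu A : 0 < mu setT < +oo ->
  mnormalize mu P A * mu setT = mu A.
Proof.
move=> /[dup] mu0oo /andP[mu0 muoo]; have fin : mu setT \is a fin_num.
  by rewrite ge0_fin_numE // ltW.
rewrite mnormalizeE // -muleA -{2}(fineK fin) -EFinM mulVf ?mule1 //.
by rewrite fine_eq0 // gt_eqF.
Qed.

Lemma mnormalize_prob mu A : mu setT = 1 -> mnormalize mu P A = mu A.
Proof. by move=> mu1; rewrite mnormalizeE mu1 ?lte01 ?ltey // invr1 mule1. Qed.

Lemma le_mnormalize (c : R) mu mu' : (0 <= c)%R ->
  0 < mu setT < +oo -> 0 < mu' setT < +oo -> mu setT <= mu' setT ->
  (forall A, measurable A -> c%:E * mu' A <= mu A) ->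
  forall A, measurable A -> c%:E * mnormalize mu' P A <= mnormalize mu P A.
Proof.
move=> c0 mu0oo mu'0oo le_mu cmu A mA; rewrite !mnormalizeE // muleA.
have [mu_gt0 mu'_gt0] := (fine_gt0 mu0oo, fine_gt0 mu'0oo).
apply: le_trans (lee_wpmul2r _ (cmu A mA)) _; first by rewrite lee_fin invr_ge0 ltW.
apply: lee_wpmul2l => //; rewrite lee_fin lef_pV2 ?posrE //.
by apply: fine_le => //; rewrite ge0_fin_numE //; [case/andP: mu0oo | case/andP: mu'0oo].
Qed.

End mnormalize_facts.

Section likelihood.
Context {R : realType} {d : measure_display} {V : measurableType d}.
Variable piV : probability V R.
Variables (X : finType) (n : nat) (K : nat -> X -> V -> V -> R).
Hypothesis Kmeas : forall i x, (1 <= i)%N ->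
  measurable_fun [set: V * V] (fun p : V * V => K i x p.1 p.2).
Hypothesis Kprob : forall i v w, (1 <= i)%N -> \sum_(x : X) K i x v w = 1.
Variable nu : nat -> R.
Hypothesis nu_pos : forall i, (1 <= i)%N -> 0 < nu i.
Hypothesis K_bounds : forall i x v w, (1 <= i)%N -> nu i <= K i x v w <= 1.

Let K_ge0 i x v w : (1 <= i)%N -> 0 <= K i x v w.
Proof.
by move=> i1; case/andP: (K_bounds i x v w i1) => + _; exact/le_trans/ltW/nu_pos.
Qed.

Let K_ge_nu i x v w : (1 <= i)%N -> nu i <= K i x v w.
Proof. by move=> i1; case/andP: (K_bounds i x v w i1). Qed.

Let K_le1 i x v w : (1 <= i)%N -> K i x v w <= 1.
Proof. by move=> i1; case/andP: (K_bounds i x v w i1). Qed.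

Variables (q : nat) (y : n.-tuple X).

(* Factor i of the likelihood of y_{q:n} along s = V_{1:n+1}, indexed from 0
   (s_i = V_{i+1}); for an unobserved X_{i+1} it is 1, the sum over x. *)
Definition lik_factor (i : 'I_n) (s : seq V) : R :=
  if (q <= i.+1)%N then K i.+1 (tnth y i) (nth point s i) (nth point s i.+1) else 1.

Definition lik (P : pred 'I_n) (s : seq V) : R := \prod_(i < n | P i) lik_factor i s.

Lemma lik_ge0 P s : 0 <= lik P s.
Proof. by apply: prodr_ge0 => i _; rewrite /lik_factor; case: ifP => // _; exact: K_ge0. Qed.

Lemma lik_le1 P s : lik P s <= 1.
Proof.
apply: prodr_ile1 => i _; rewrite /lik_factor; case: ifP => _; last by rewrite ler01 lexx.
by rewrite K_ge0 // K_le1.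
Qed.

Lemma lik_lbound P : exists2 c, 0 < c & forall s, c <= lik P s.
Proof.
exists (\prod_(i < n | P i) if (q <= i.+1)%N then nu i.+1 else 1).
  by apply: prodr_gt0 => i _; case: ifP => // _; exact: nu_pos.
move=> s; apply: ler_prod => i _; rewrite /lik_factor.
case: ifP => _; last by rewrite ler01 lexx.
by rewrite ltW ?nu_pos ?K_ge_nu.
Qed.

Lemma measurable_lik P d' (T : measurableType d') (s : T -> seq V) :
  measurable_seq s -> measurable_fun setT (fun z => lik P (s z)).
Proof.
move=> ms; rewrite /lik (_ : (fun z => _) =
    fun z => \prod_(i < n) if P i then lik_factor i (s z) else 1); last first.
  by apply/funext => z; rewrite big_mkcond.
apply: measurable_prod => i _; case: (P i) => //; rewrite /lik_factor.
case: (q <= i.+1)%N => //.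
exact: measurableT_comp (Kmeas _ _ (ltn0Sn i)) (measurable_fun_pair (ms i) (ms i.+1)).
Qed.

Lemma lik_cat k (a b : seq V) : size a = k ->
  lik predT (a ++ b) =
  lik (fun i => (i < k)%N) (a ++ [:: nth point b 0]) *
  lik (fun i => (k <= i)%N) (nseq k point ++ b).
Proof.
move=> sa; rewrite /lik (bigID (fun i : 'I_n => (i < k)%N)) /=.
congr (_ * _); apply: eq_big => [i|i ik]; rewrite ?ltnNge ?negbK //;
  rewrite /lik_factor; case: ifP => // _.
  have nth_prefix j : (j <= k)%N -> nth point (a ++ b) j = nth point (a ++ [:: nth point b 0]) j.
    rewrite !nth_cat sa leq_eqVlt => /orP[/eqP->|->] //.
    by rewrite ltnn subnn.
  by rewrite !nth_prefix // ltnW.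
have nth_suffix j : (k <= j)%N -> nth point (a ++ b) j = nth point (nseq k point ++ b) j.
  by move=> kj; rewrite !nth_cat sa size_nseq ltnNge kj.
by move: ik; rewrite -leqNgt => ik; rewrite !nth_suffix // leqW.
Qed.

Lemma lik_unobserved_prefix k s : (k < q)%N -> lik (fun i => (i < k)%N) s = 1.
Proof.
move=> kq; apply: big1 => i ik; rewrite /lik_factor ifF //.
by apply/negbTE; rewrite -ltnNge (leq_ltn_trans ik kq).
Qed.

(* Distribute the sum over x across the product of kernels: the unobserved
   coordinates contribute factors [\sum_x K i x v w = 1]. *)
Lemma sum_weight_agree (v : n.+1.-tuple V) :
  \sum_(x : n.-tuple X | agree q x y) weight K x v = lik predT (val v).
Proof.
pose F (i : 'I_n) (z : X) := K i.+1 z (nth point (val v) i) (nth point (val v) i.+1).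
pose Q (i : 'I_n) := [pred z : X | (q <= i.+1)%N ==> (z == tnth y i)].
have -> : lik predT (val v) = \prod_(i < n) \sum_(z | Q i z) F i z.
  apply: eq_bigr => i _; rewrite /lik_factor /Q /F; case: ifP => qi /=.
    by rewrite (big_pred1_eq _ (tnth y i)).
  by rewrite Kprob.
rewrite bigA_distr_big_dep (reindex (fun f : {ffun 'I_n -> X} => [tuple f i | i < n])) /=.
  apply: eq_big => f.
    by rewrite /agree; apply/forallP/familyP => h i; move: (h i); rewrite tnth_mktuple.
  move=> _; apply: eq_bigr => i _.
  by rewrite tnth_mktuple /F !(tnth_nth point).
apply: onW_bij; exists (fun x : n.-tuple X => [ffun i => tnth x i]).
  by move=> f; apply/ffunP => i; rewrite ffunE tnth_mktuple.
by move=> x; apply: eq_from_tnth => i; rewrite tnth_mktuple ffunE.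
Qed.

Let measurable_weight (x : n.-tuple X) : measurable_fun setT (weight K x).
Proof.
apply: measurable_prod => i _.
exact: measurableT_comp (Kmeas _ _ (ltn0Sn i))
  (measurable_fun_pair (measurable_tnth _) (measurable_tnth _)).
Qed.

Let weight_ge0 (x : n.-tuple X) v : 0 <= weight K x v.
Proof. by apply: prodr_ge0 => i _; exact: K_ge0. Qed.

Lemma PE_tint (f : n.+1.-tuple V -> \bar R) :
  measurable_fun setT f -> (forall v, 0 <= f v)%E ->
  PE piV K q f y = tint piV (fun v => f v * (lik predT (val v))%:E)%E.
Proof.
move=> mf f0; rewrite /PE big_mkcond.
transitivity (\sum_(x : n.-tuple X)
    tint piV (fun v => if agree q x y then f v * (weight K x v)%:E else 0))%E.
  by apply: eq_bigr => x _; case: ifP => _ //; rewrite tint_cst.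
rewrite -ge0_tint_sum; last 2 first.
- move=> x; case: (agree q x y) => //.
  by apply: emeasurable_funM => //; apply/measurable_EFinP; exact: measurable_weight.
- by move=> x v; case: (agree q x y) => //; rewrite mule_ge0 ?lee_fin ?weight_ge0.
congr tint; apply/funext => v.
rewrite -big_mkcond /= -ge0_sume_distrr; last by move=> x _; rewrite lee_fin weight_ge0.
by rewrite sumEFin sum_weight_agree.
Qed.

Lemma tint_lik_bounds P m (s : m.-tuple V -> seq V) : measurable_seq s ->
  (0 < tint piV (fun a => (lik P (s a))%:E) < +oo)%E.
Proof.
move=> ms; have mlik : measurable_fun setT (fun a => (lik P (s a))%:E).
  exact/measurable_EFinP/measurable_lik.
have [c c_gt0 c_le] := lik_lbound P.
have lb : (c%:E <= tint piV (fun a => (lik P (s a))%:E))%E.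
  rewrite -[X in (X <= _)%E](tint_cst piV m c%:E).
  apply: ge0_le_tint => //.
  - by move=> a; rewrite lee_fin ltW.
  - by move=> a; rewrite lee_fin.
have ub : (tint piV (fun a => (lik P (s a))%:E) <= 1)%E.
  rewrite -[X in (_ <= X)%E](tint_cst piV m 1%E).
  apply: ge0_le_tint => //.
  - by move=> a; rewrite lee_fin lik_ge0.
  - by move=> a; rewrite lee_fin lik_le1.
by rewrite (lt_le_trans _ lb) ?lte_fin // (le_lt_trans ub) ?ltey.
Qed.

Section backward_kernel.
Variable k : nat.

Definition prefix_lik (z : V * k.-tuple V) : R :=
  lik (fun i => (i < k)%N) (val z.2 ++ [:: z.1]).

Lemma measurable_prefix_lik : measurable_fun setT prefix_lik.
Proof.
apply: measurable_lik; apply: (measurable_seq_cat k).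
- by move=> z; rewrite size_tuple.
- exact: measurable_seq_val.
- exact: measurable_seq1.
Qed.

Lemma prefix_lik_ge0 z : 0 <= prefix_lik z.
Proof. exact: lik_ge0. Qed.

(* At V_{k+1} = w, the unnormalised conditional law of V_k: the trajectory
   V_{1:k} has density [prefix_lik] with respect to piV^k. *)
Definition backward_density : V -> {measure set V -> \bar R} :=
  tdensity_kernel piV (measurable_nth k k.-1) measurable_prefix_lik prefix_lik_ge0.

Definition backward_kernel (w : V) : probability V R :=
  mnormalize (backward_density w) piV.

Lemma backward_densityT w :
  backward_density w setT = tint piV (fun a => (prefix_lik (w, a))%:E).
Proof. exact: tdensityT. Qed.

Lemma backward_density_setT w : (0 < backward_density w setT < +oo)%E.
Proof.
rewrite backward_densityT.
apply: (tint_lik_bounds _ _ (fun a : k.-tuple V => val a ++ [:: w])).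
apply: (measurable_seq_cat k).
- by move=> a; rewrite size_tuple.
- exact: measurable_seq_val.
- exact: measurable_seq1.
Qed.

Lemma measurable_backward_kernel A : measurable A ->
  measurable_fun setT (fun w => backward_kernel w A).
Proof. exact: (measurable_kernel (knormalize backward_density piV)). Qed.

Lemma backward_kernel_lt_q w A : (0 < k < q)%N -> measurable A ->
  backward_kernel w A = piV A.
Proof.
case/andP=> k_gt0 kq mA.
have densityE B : measurable B -> backward_density w B = piV B.
  move=> mB; rewrite -(tint_indic_nth piV k k.-1 B) ?ltn_predL //.
  congr tint; apply/funext => a.
  by rewrite /prefix_lik /= lik_unobserved_prefix // mule1.
rewrite -densityE //; apply: mnormalize_prob.
by rewrite densityE // probability_setT.
Qed.

Definition inner_lik (a : k.-tuple V) : R := lik (fun i => (i.+1 < k)%N) (val a).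

Lemma measurable_inner_lik : measurable_fun setT inner_lik.
Proof. exact/measurable_lik/measurable_seq_val. Qed.

Lemma inner_lik_ge0 a : 0 <= inner_lik a.
Proof. exact: lik_ge0. Qed.

Lemma prefix_lik_bounds w a : (0 < k <= n)%N -> (q <= k)%N ->
  nu k * inner_lik a <= prefix_lik (w, a) <= inner_lik a.
Proof.
case/andP=> k_gt0 kn qk; have km1 : (k.-1 < n)%N by rewrite prednK.
rewrite /prefix_lik /inner_lik /lik.
rewrite [\prod_(i < n | (i < k)%N) _](bigD1 (Ordinal km1)) /= ?ltn_predL //.
have -> : \prod_(i < n | (i < k)%N && (i != Ordinal km1)) lik_factor i (val a ++ [:: w]) =
    \prod_(i < n | (i.+1 < k)%N) lik_factor i (val a).
  apply: eq_big => i; rewrite -val_eqE /=; first lia.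
  have nth_a j : (j < k)%N -> nth point (val a ++ [:: w]) j = nth point (val a) j.
    by move=> jk; rewrite nth_cat size_tuple jk.
  by move=> ik; rewrite /lik_factor !nth_a //; lia.
have P_ge0 : 0 <= \prod_(i < n | (i.+1 < k)%N) lik_factor i (val a) by exact: lik_ge0.
have /andP[nu_le le1] : nu k <= lik_factor (Ordinal km1) (val a ++ [:: w]) <= 1.
  by rewrite /lik_factor /= prednK // qk K_bounds.
by rewrite ler_wpM2r //= ler_piMl.
Qed.

Definition inner_density : {measure set V -> \bar R} :=
  tdensity piV (measurable_nth k k.-1) measurable_inner_lik inner_lik_ge0.

Lemma inner_densityT : inner_density setT = tint piV (fun a => (inner_lik a)%:E).
Proof. exact: tdensityT. Qed.

Section split.
Hypothesis kn : (k <= n)%N.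

Let ek : (k + (n.+1 - k) = n.+1)%N := subnKC (leqW kn).
Let join (a : k.-tuple V) (b : (n.+1 - k).-tuple V) : n.+1.-tuple V :=
  tcast ek (cat_tuple a b).
Let a0 : k.-tuple V := nseq_tuple k point.

Let val_join a b : val (join a b) = val a ++ val b.
Proof. exact: val_tcast. Qed.

Let tint_join (f : n.+1.-tuple V -> \bar R) :
  tint piV f = tint piV (fun a => tint piV (fun b => f (join a b))).
Proof. by rewrite (tint_tcast piV _ _ ek) tint_cat. Qed.

Let measurable_join_snd a : measurable_fun setT (join a).
Proof.
apply: measurable_tuple_seq.
rewrite (_ : (fun b => _) = fun b => val a ++ val b); last first.
  by apply/funext => b; rewrite val_join.
apply: (measurable_seq_cat k) => // [b|]; [exact: size_tuple | exact: measurable_seq_val].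
Qed.

Let join_prefix a b : (0 < k)%N -> tnth (join a b) (inord k.-1) = nth point (val a) k.-1.
Proof.
move=> k_gt0; rewrite (tnth_nth point) val_join inordK; last first.
  by rewrite ltnS (leq_trans (leq_pred k) kn).
by rewrite nth_cat size_tuple ltn_predL k_gt0.
Qed.

Let join_suffix a b : tnth (join a b) (inord k) = nth point (val b) 0.
Proof.
rewrite (tnth_nth point) val_join inordK ?ltnS //.
by rewrite nth_cat size_tuple ltnn subnn.
Qed.

Let indic_join hi (B : set (n.+1.-tuple V)) : depends_only k.+1 hi B ->
  forall a b, \1_B (join a b) = \1_B (join a0 b) :> R.
Proof.
move=> dB a b; have suffixE a' : forall i : 'I_n.+1, (k.+1 <= i.+1 <= hi)%N ->
    tnth (join a' b) i = tnth (join a0 b) i.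
  move=> i /andP[ki _]; rewrite !(tnth_nth point) !val_join !nth_cat !size_tuple.
  by rewrite ltnNge -ltnS ki.
rewrite !indicE (_ : (join a b \in B) = (join a0 b \in B)) //.
apply/idP/idP => /set_mem Bj; apply/mem_set; first exact: dB (suffixE a) Bj.
by apply: dB Bj => i /(suffixE a) ->.
Qed.

(* The [k] padding coordinates are not read by the factors [i >= k]. *)
Definition suffix_lik (b : (n.+1 - k).-tuple V) : R :=
  lik (fun i => (k <= i)%N) (nseq k point ++ val b).

Let measurable_suffix_lik : measurable_fun setT suffix_lik.
Proof.
apply: measurable_lik; apply: (measurable_seq_cat k) => //.
- by move=> b; rewrite size_nseq.
- exact: measurable_seq_val.
Qed.

Let lik_join a b :
  lik predT (val (join a b)) = prefix_lik (nth point (val b) 0, a) * suffix_lik b.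
Proof. by rewrite val_join (lik_cat _ _ _ (size_tuple a)). Qed.

Let tint_join_factor hi (B : set (n.+1.-tuple V)) (g : V * k.-tuple V -> \bar R) :
  measurable B -> depends_only k.+1 hi B -> measurable_fun setT g -> (forall z, 0 <= g z)%E ->
  tint piV (fun a => tint piV (fun b => (\1_B (join a b))%:E * g (nth point (val b) 0, a) *
    (lik predT (val (join a b)))%:E))%E =
  tint piV (fun b => (\1_B (join a0 b))%:E * (suffix_lik b)%:E *
    tint piV (fun a => g (nth point (val b) 0, a) * (prefix_lik (nth point (val b) 0, a))%:E))%E.
Proof.
move=> mB dB mg g0.
have mb0 : measurable_fun setT (fun z : k.-tuple V * (n.+1 - k).-tuple V => nth point (val z.2) 0).
  exact: measurableT_comp (measurable_nth _ 0) measurable_snd.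
rewrite -(tint_swap_mul piV _ _ (fun b => (\1_B (join a0 b))%:E * (suffix_lik b)%:E)%E
  (fun z => g (nth point (val z.2) 0, z.1) * (prefix_lik (nth point (val z.2) 0, z.1))%:E)%E).
- congr tint; apply/funext => a; congr tint; apply/funext => b.
  rewrite (indic_join _ _ dB) lik_join EFinM /=.
  by rewrite [(_ * (suffix_lik b)%:E)%E in LHS]muleC muleACA.
- apply: emeasurable_funM; apply/measurable_EFinP; last exact: measurable_suffix_lik.
  exact: measurableT_comp (measurable_indic _) (measurable_join_snd a0).
- apply: emeasurable_funM.
    exact: measurableT_comp mg (measurable_fun_pair mb0 measurable_fst).
  apply/measurable_EFinP.
  exact: measurableT_comp measurable_prefix_lik (measurable_fun_pair mb0 measurable_fst).
- by move=> b; rewrite mule_ge0 ?lee_fin ?indic_ge0 ?lik_ge0.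
- by move=> z; rewrite mule_ge0 ?lee_fin ?prefix_lik_ge0.
Qed.

Lemma PE_backward_kernel hi (A : set V) (B : set (n.+1.-tuple V)) :
  (0 < k)%N -> measurable A -> measurable B -> depends_only k.+1 hi B ->
  PE piV K q (fun v => (\1_B v * \1_A (tnth v (inord k.-1)))%:E) y =
  PE piV K q (fun v => (\1_B v)%:E * backward_kernel (tnth v (inord k)) A)%E y.
Proof.
move=> k_gt0 mA mB dB.
have mkernel := measurable_backward_kernel _ mA.
rewrite !PE_tint; last 4 first.
- apply: emeasurable_funM; first exact/measurable_EFinP/measurable_indic.
  exact: measurableT_comp mkernel (measurable_tnth _).
- by move=> v; rewrite mule_ge0 ?lee_fin ?indic_ge0.
- apply/measurable_EFinP/measurable_funM; first exact: measurable_indic.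
  exact: measurableT_comp (measurable_indic _) (measurable_tnth _).
- by move=> v; rewrite lee_fin mulr_ge0 ?indic_ge0.
rewrite !tint_join.
under eq_fun do under eq_fun do rewrite join_prefix // EFinM.
under [in RHS]eq_fun do under eq_fun do rewrite join_suffix.
rewrite (tint_join_factor _ _ (fun z => (\1_A (nth point (val z.2) k.-1))%:E) mB dB);
  last 2 first.
- apply/measurable_EFinP.
  exact: measurableT_comp (measurable_indic _) (measurableT_comp (measurable_nth _ _) measurable_snd).
- by move=> z; rewrite lee_fin indic_ge0.
rewrite (tint_join_factor _ _ (fun z => backward_kernel z.1 A) mB dB) //; last first.
  exact: measurableT_comp mkernel measurable_fst.
congr tint; apply/funext => b; congr (_ * _)%E.
rewrite /= ge0_tintZl //; last 2 first.
- apply/measurable_EFinP.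
  exact: measurableT_comp measurable_prefix_lik (measurable_fun_pair _ _).
- by move=> a; rewrite lee_fin prefix_lik_ge0.
rewrite -backward_densityT; apply/esym/mnormalize_mul_setT.
exact: backward_density_setT.
Qed.

End split.

Section minorization.
Hypotheses (kn : (0 < k <= n)%N) (qk : (q <= k)%N).

Let mprefix w : measurable_fun setT (fun a => (prefix_lik (w, a))%:E).
Proof.
apply/measurable_EFinP.
exact: measurableT_comp measurable_prefix_lik (measurable_fun_pair _ _).
Qed.

Let mindic (B : set V) : measurable B ->
  measurable_fun setT (fun a : k.-tuple V => (\1_B (nth point (val a) k.-1) : R)%:E).
Proof.
move=> mB; apply/measurable_EFinP.
exact: measurableT_comp (measurable_indic _) (measurable_nth _ _).
Qed.

Lemma inner_density_setT : (0 < inner_density setT < +oo)%E.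
Proof.
rewrite inner_densityT; apply: (tint_lik_bounds _ _ (fun a : k.-tuple V => val a)).
exact: measurable_seq_val.
Qed.

Lemma backward_density_le_inner w :
  (backward_density w setT <= inner_density setT)%E.
Proof.
rewrite inner_densityT backward_densityT; apply: ge0_le_tint => //.
- by apply/measurable_EFinP; exact: measurable_inner_lik.
- by move=> a; rewrite lee_fin prefix_lik_ge0.
- by move=> a; case/andP: (prefix_lik_bounds w a kn qk) => _; rewrite lee_fin.
Qed.

Lemma inner_density_le_backward w B : measurable B ->
  ((nu k)%:E * inner_density B <= backward_density w B)%E.
Proof.
have nu_ge0 : 0 <= nu k by case/andP: kn => k_gt0 _; rewrite ltW // nu_pos.
have minner : measurable_fun setT (fun a => (inner_lik a)%:E).
  by apply/measurable_EFinP; exact: measurable_inner_lik.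
move=> mB; rewrite -ge0_tintZl //; last 2 first.
- by apply: emeasurable_funM; [exact: mindic | exact: minner].
- by move=> a; rewrite mule_ge0 ?lee_fin ?indic_ge0 ?inner_lik_ge0.
apply: ge0_le_tint => [||a|a].
- apply: emeasurable_funM => //; apply: emeasurable_funM; [exact: mindic | exact: minner].
- by apply: emeasurable_funM; [exact: mindic | exact: mprefix].
- by rewrite !mule_ge0 ?lee_fin ?indic_ge0 ?inner_lik_ge0.
rewrite muleCA -!EFinM lee_fin ler_wpM2l ?indic_ge0 //.
by case/andP: (prefix_lik_bounds w a kn qk).
Qed.

Lemma backward_kernel_minorization : exists mu : probability V R,
  forall A, measurable A -> forall w, ((nu k)%:E * mu A <= backward_kernel w A)%E.
Proof.
exists (mnormalize inner_density piV) => A mA w.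
apply: le_mnormalize => //.
- by case/andP: kn => k_gt0 _; rewrite ltW // nu_pos.
- exact: backward_density_setT.
- exact: inner_density_setT.
- exact: backward_density_le_inner.
- by move=> B mB; exact: inner_density_le_backward.
Qed.

End minorization.

End backward_kernel.

End likelihood.

Theorem lemma4 (R : realType) (d : measure_display) (V : measurableType d)
    (piV : probability V R) (X : finType) (n : nat)
    (K : nat -> X -> V -> V -> R) (nu : nat -> R)
    (hn : (1 <= n)%N)
    (Kmeas : forall i x, (1 <= i)%N ->
       measurable_fun [set: V * V] (fun p : V * V => K i x p.1 p.2))
    (Kprob : forall i v w, (1 <= i)%N -> \sum_(x : X) K i x v w = 1)
    (nu_pos : forall i, (1 <= i)%N -> 0 < nu i)
    (H2 : forall i x v w, (1 <= i)%N -> nu i <= K i x v w <= 1) :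
  forall q : nat, (1 <= q <= n)%N ->
  exists Kc : nat -> n.-tuple X -> V -> probability V R,
    (* kernels: measurable in the conditioning point *)
    (forall k y A, (1 <= k < n)%N -> measurable A ->
        measurable_fun [set: V] (fun w : V => Kc k y w A)) /\
    (* conditionally on X_{q:n}, (V_n,...,V_1) is Markov with kernels Kc:
       Kc k (V_{k+1}) A = P(V_k in A | V_{k+1:n}, X_{q:n})
                        = P(V_k in A | V_{k+1}, X_{q:n}) *)
    (forall k, (1 <= k < n)%N ->
        cond_version piV K q k k.+1 n (Kc k) /\
        cond_version piV K q k k.+1 k.+1 (Kc k)) /\
    (* minorization for q <= k < n *)
    (forall k, (q <= k < n)%N -> forall y : n.-tuple X,
        exists mu : probability V R, forall A, measurable A -> forall w,
          ((nu k)%:E * mu A <= Kc k y w A)%E) /\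
    (* independence from the conditioning for 1 <= k < q *)
    (forall k, (1 <= k < q)%N -> forall y w A, measurable A ->
        Kc k y w A = piV A).
Proof.
move=> q /andP[q_gt0 _].
exists (fun k y => backward_kernel piV X n K Kmeas nu nu_pos H2 q y k).
split; [|split; [|split]].
- by move=> k y A _ mA; exact: measurable_backward_kernel.
- move=> k /andP[k_gt0 /ltnW kn].
  by split=> y A B mA mB dB; apply: PE_backward_kernel => //; exact: dB.
- move=> k /andP[qk kn] y; apply: backward_kernel_minorization => //.
  by rewrite (leq_trans q_gt0 qk) ltnW.
- by move=> k kq y w A mA; exact: backward_kernel_lt_q.
Qed.
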